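(* Consider the adaptive learning forward guidance model below, for any integer $T\ge1$ and any $\bar i<0$. Then $x_0$ and $\pi_0$ do not depend on $\bar i$: $\partial\pi_0/\partial\bar i=\partial x_0/\partial\bar i=0$ for every $T$. In particular, the model does not exhibit the forward guidance puzzle.
   Context: Parameters: $0<\beta<1$, $\sigma,\lambda>0$, $\psi>1$, gains $\gamma_{x,t},\gamma_{\pi,t}$. Model for $t\ge0$: $x_t=\hat E_t x_{t+1}-\sigma(i_t-\hat E_t\pi_{t+1})$, $\pi_t=\lambda x_t+\beta\hat E_t\pi_{t+1}$, $\hat E_t x_{t+1}=\gamma_{x,t}x_{t-1}+(1-\gamma_{x,t})\hat E_{t-1}x_t$, $\hat E_t\pi_{t+1}=\gamma_{\pi,t}\pi_{t-1}+(1-\gamma_{\pi,t})\hat E_{t-1}\pi_t$, with initial values $x_{-1},\pi_{-1},\hat E_{-1}x_0,\hat E_{-1}\pi_0$ given and not depending on $\bar i$. Policy: $i_t=0$ for $t=0,\dots,T-1$, $i_T=\bar i<0$, and $i_t=\psi\pi_t$ for $t>T$. Denote by $\partial/\partial i_T$ the derivative with respect to $\bar i$. The model exhibits the forward guidance puzzle if $\lim_{T\to\infty}\partial\pi_0/\partial i_T=\lim_{T\to\infty}\partial x_0/\partial i_T=-\infty$. *)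

From Stdlib Require Import Reals ZArith Lra.
From Coquelicot Require Import Coquelicot.
Open Scope R_scope.

(* Time is indexed by Z so that period t = -1 (initial values) is available.
   Conventions:  x t = x_t,  pi t = pi_t,  i t = i_t,
                 Ex t  = \hat E_t x_{t+1},  Epi t = \hat E_t pi_{t+1}
   (so Ex (-1) = \hat E_{-1} x_0 and Epi (-1) = \hat E_{-1} pi_0).
   gx t, gp t are the gains gamma_{x,t}, gamma_{pi,t}. *)

Definition policy (psi : R) (T : Z) (ibar : R) (pi : Z -> R) (t : Z) : R :=
  if Z.ltb t T then 0 else if Z.eqb t T then ibar else psi * pi t.

Definition solves (beta sigma lambda psi : R) (gx gp : Z -> R)
    (xm1 pim1 Ex0 Epi0 : R) (T : Z) (ibar : R)
    (x pi Ex Epi i : Z -> R) : Prop :=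
  x (-1)%Z = xm1 /\ pi (-1)%Z = pim1 /\ Ex (-1)%Z = Ex0 /\ Epi (-1)%Z = Epi0 /\
  forall t : Z, (0 <= t)%Z ->
    x t = Ex t - sigma * (i t - Epi t) /\
    pi t = lambda * x t + beta * Epi t /\
    Ex t = gx t * x (t - 1)%Z + (1 - gx t) * Ex (t - 1)%Z /\
    Epi t = gp t * pi (t - 1)%Z + (1 - gp t) * Epi (t - 1)%Z /\
    i t = policy psi T ibar pi t.

(* Forward guidance puzzle, given the sequences (indexed by the horizon T)
   of derivatives d pi_0 / d i_T and d x_0 / d i_T. *)
Definition fg_puzzle (dpi dx : nat -> R) : Prop :=
  is_lim_seq dpi m_infty /\ is_lim_seq dx m_infty.

From Stdlib Require Import Reals ZArith Lia.
From Coquelicot Require Import Coquelicot.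
Open Scope R_scope.

(* Under adaptive learning the period-0 expectations are backward looking:
   they are built from the period -1 data and the gains alone.  Since T >= 1
   the policy rate at t = 0 is the zero lower bound, so the IS and Phillips
   curves pin x_0 and pi_0 down without any reference to ibar. *)

Definition learned_expectation (g : R) (y_prev E_prev : R) : R :=
  g * y_prev + (1 - g) * E_prev.

Definition output_at_zero_rate (sigma Ex Epi : R) : R :=
  Ex - sigma * (0 - Epi).

Section PeriodZero.

Context {beta sigma lambda psi : R} {gx gp : Z -> R} {xm1 pim1 Ex0 Epi0 : R}.
Context {T : Z} {ibar : R} {x pi Ex Epi i : Z -> R}.
Hypothesis T_pos : (0 < T)%Z.
Hypothesis sol : solves beta sigma lambda psi gx gp xm1 pim1 Ex0 Epi0 T ibar x pi Ex Epi i.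

Let Ex_0 := learned_expectation (gx 0%Z) xm1 Ex0.
Let Epi_0 := learned_expectation (gp 0%Z) pim1 Epi0.

Lemma solves_x0 : x 0%Z = output_at_zero_rate sigma Ex_0 Epi_0.
Proof.
  destruct sol as (x_init & pi_init & Ex_init & Epi_init & eqs).
  destruct (eqs 0%Z (Z.le_refl 0)) as (-> & _ & -> & -> & ->).
  simpl Z.sub; rewrite x_init, pi_init, Ex_init, Epi_init.
  unfold policy; rewrite (proj2 (Z.ltb_lt 0 T) T_pos); reflexivity.
Qed.

Lemma solves_pi0 :
  pi 0%Z = lambda * output_at_zero_rate sigma Ex_0 Epi_0 + beta * Epi_0.
Proof.
  rewrite <- solves_x0.
  destruct sol as (_ & pi_init & _ & Epi_init & eqs).
  destruct (eqs 0%Z (Z.le_refl 0)) as (_ & -> & _ & -> & _).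
  simpl Z.sub; rewrite pi_init, Epi_init; reflexivity.
Qed.

End PeriodZero.

Lemma is_derive_locally_const (f : R -> R) (c a : R) :
  locally a (fun y => f y = c) -> is_derive f a 0.
Proof.
  intros f_const.
  apply (is_derive_ext_loc (fun _ => c)).
  - apply (filter_imp (fun y => f y = c)); [now intros y -> | exact f_const].
  - exact (is_derive_const (K := R_AbsRing) c a).
Qed.

Lemma is_derive_const_on_neg (f : R -> R) (c a : R) :
  a < 0 -> (forall y, y < 0 -> f y = c) -> is_derive f a 0.
Proof.
  intros a_neg f_const.
  apply is_derive_locally_const with c.
  exact (locally_open _ _ (open_lt 0) f_const a a_neg).
Qed.

Lemma not_is_lim_seq_m_infty_eventually_finite (u : nat -> R) (l : R) :
  eventually (fun n => u n = l) -> ~ is_lim_seq u m_infty.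
Proof.
  intros u_ev u_lim.
  assert (u_to_l : is_lim_seq u l).
  { apply (is_lim_seq_ext_loc (fun _ => l)); [| apply is_lim_seq_const].
    apply (filter_imp (fun n => u n = l)); [now intros n -> | exact u_ev]. }
  pose proof (is_lim_seq_unique _ _ u_lim) as lim_m_infty.
  rewrite (is_lim_seq_unique _ _ u_to_l) in lim_m_infty.
  discriminate.
Qed.

Theorem proposition10 (beta sigma lambda psi : R) (gx gp : Z -> R)
    (xm1 pim1 Ex0 Epi0 : R)
    (X Pi EX EPi I : nat -> R -> Z -> R) :
  0 < beta < 1 -> 0 < sigma -> 0 < lambda -> 1 < psi ->
  (forall (T : nat) (ib : R), (1 <= T)%nat -> ib < 0 ->
     solves beta sigma lambda psi gx gp xm1 pim1 Ex0 Epi0 (Z.of_nat T) ib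
       (X T ib) (Pi T ib) (EX T ib) (EPi T ib) (I T ib)) ->
  (forall (T : nat) (ibar : R), (1 <= T)%nat -> ibar < 0 ->
     is_derive (fun ib => Pi T ib 0%Z) ibar 0 /\
     is_derive (fun ib => X T ib 0%Z) ibar 0) /\
  (forall ibar : R, ibar < 0 ->
     ~ fg_puzzle (fun T => Derive (fun ib => Pi T ib 0%Z) ibar)
                 (fun T => Derive (fun ib => X T ib 0%Z) ibar)).
Proof.
  intros _ _ _ _ sol.
  assert (T_pos : forall T : nat, (1 <= T)%nat -> (0 < Z.of_nat T)%Z) by lia.
  assert (derivs : forall (T : nat) (ibar : R), (1 <= T)%nat -> ibar < 0 ->
     is_derive (fun ib => Pi T ib 0%Z) ibar 0 /\
     is_derive (fun ib => X T ib 0%Z) ibar 0).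
  { intros T ibar HT ibar_neg; split;
      eapply (is_derive_const_on_neg _ _ _ ibar_neg); intros ib ib_neg.
    - exact (solves_pi0 (T_pos T HT) (sol T ib HT ib_neg)).
    - exact (solves_x0 (T_pos T HT) (sol T ib HT ib_neg)). }
  split; [exact derivs |].
  intros ibar ibar_neg [pi_puzzle _].
  refine (not_is_lim_seq_m_infty_eventually_finite _ 0 _ pi_puzzle).
  exists 1%nat; intros T HT; apply is_derive_unique, (derivs T ibar HT ibar_neg).
Qed.
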